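(* A permutation $w\in S_n$ is circuit-free if and only if $|R(w)|=|B(w)|+|C(w)|-1$.
   Context: $S_n$ is generated by the adjacent transpositions $s_1,\dots,s_{n-1}$. A reduced word for $w$ is a word $i_1\cdots i_k$ with $w=s_{i_1}\cdots s_{i_k}$ and $k$ minimal; $R(w)$ is the set of reduced words. A braid move replaces a factor (consecutive letters) $i(i+1)i$ by $(i+1)i(i+1)$ or vice versa; a commutation move replaces a factor $ij$ with $|i-j|>1$ by $ji$. $B(w)$ (resp. $C(w)$) is the set of equivalence classes of $R(w)$ under sequences of braid moves (resp. commutation moves). Let $\Gamma(w)$ be the simple graph with vertex set $B(w)\sqcup C(w)$, with an edge between $B\in B(w)$ and $C\in C(w)$ if and only if $B\cap C\neq\emptyset$. The permutation $w$ is circuit-free if $\Gamma(w)$ contains no cycle (i.e. $\Gamma(w)$ is a forest; it is in fact connected, so this means it is a tree). *)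

From HB Require Import structures.
From mathcomp Require Import all_boot all_order all_fingroup.
From mathcomp Require Import boolp.
From Stdlib Require Import ClassicalEpsilon.

Set Implicit Arguments.
Unset Strict Implicit.
Unset Printing Implicit Defensive.

Section Words.
Variable n : nat.

(* Letters are elements i : 'I_n with 0 < i; the letter i stands for the
   adjacent transposition s_i = (i-1 i) of 'I_n = {0,...,n-1}, i.e. s_i
   exchanges the i-th and (i+1)-th points of {1,...,n}. *)
Definition pred_ord (i : 'I_n) : 'I_n :=
  Ordinal (leq_ltn_trans (leq_pred i) (ltn_ord i)).

Definition sadj (i : 'I_n) : 'S_n := tperm (pred_ord i) i.

Definition word_ok (s : seq 'I_n) : bool := all (fun i : 'I_n => 0 < val i) s.

Definition prodw (s : seq 'I_n) : 'S_n := (\prod_(i <- s) sadj i)%g.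

Definition has_word_len (w : 'S_n) (k : nat) : bool :=
  [exists t : k.-tuple 'I_n, word_ok t && (prodw t == w)].

Definition len (w : 'S_n) : nat :=
  match excluded_middle_informative (exists k, has_word_len w k) with
  | left h => ex_minn h
  | right _ => 0
  end.

Definition Rw (w : 'S_n) : {set (len w).-tuple 'I_n} :=
  [set t : (len w).-tuple 'I_n | word_ok t && (prodw t == w)].

Definition braid_move (s t : seq 'I_n) : Prop :=
  exists (p q : seq 'I_n) (a b : 'I_n),
    (val b = (val a).+1 \/ val a = (val b).+1) /\
    s = p ++ [:: a; b; a] ++ q /\ t = p ++ [:: b; a; b] ++ q.

Definition comm_move (s t : seq 'I_n) : Prop :=
  exists (p q : seq 'I_n) (a b : 'I_n),
    ((val a).+1 < val b \/ (val b).+1 < val a) /\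
    s = p ++ [:: a; b] ++ q /\ t = p ++ [:: b; a] ++ q.

Definition braid_rel (w : 'S_n) : rel ((len w).-tuple 'I_n) :=
  fun s t => [&& s \in Rw w, t \in Rw w & `[< braid_move s t >]].
Definition comm_rel (w : 'S_n) : rel ((len w).-tuple 'I_n) :=
  fun s t => [&& s \in Rw w, t \in Rw w & `[< comm_move s t >]].

Arguments braid_rel : clear implicits.
Arguments comm_rel : clear implicits.

Definition Bw (w : 'S_n) : {set {set (len w).-tuple 'I_n}} :=
  equivalence_partition (connect (braid_rel w)) (Rw w).
Definition Cw (w : 'S_n) : {set {set (len w).-tuple 'I_n}} :=
  equivalence_partition (connect (comm_rel w)) (Rw w).

Definition Gvert (w : 'S_n) : finType :=
  ({set (len w).-tuple 'I_n} + {set (len w).-tuple 'I_n})%type.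

Definition Gadj (w : 'S_n) : rel (Gvert w) :=
  fun u v =>
    match u, v with
    | inl B, inr C => [&& B \in Bw w, C \in Cw w & B :&: C != set0]
    | inr C, inl B => [&& B \in Bw w, C \in Cw w & B :&: C != set0]
    | _, _ => false
    end.

Arguments Gadj : clear implicits.

Definition Gamma_has_cycle (w : 'S_n) : Prop :=
  exists p : seq (Gvert w), [/\ 3 <= size p, uniq p & path.cycle (Gadj w) p].

Definition circuit_free (w : 'S_n) : Prop := ~ Gamma_has_cycle w.

End Words.

(* Every reduced word t lies in exactly one braid class and one commutation
   class, so t |-> (its B-class, its C-class) maps R(w) onto the edges of
   Gamma(w), which has |B(w)| + |C(w)| vertices.  This map is injective.  Along a
   reduced word, record the pair of positions inverted by each letter: this lists
   the inversions of w and determines the word.  A braid move reverses three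
   pairwise intersecting pairs and a commutation move swaps two disjoint pairs,
   so braid moves keep the relative order of disjoint pairs and commutation
   moves that of intersecting pairs; a word reachable both ways therefore has
   the same list, i.e. is the same word.  By Matsumoto's theorem (any two
   reduced words are related by moves, proved by induction on the length)
   Gamma(w) is connected, and a connected graph is a tree iff it has one edge
   fewer than vertices. *)

From mathcomp Require Import all_boot all_fingroup.
From mathcomp Require Import zify boolp.
From Stdlib Require Import ClassicalEpsilon Relation_Operators.

Set Implicit Arguments.
Unset Strict Implicit.
Unset Printing Implicit Defensive.

Section AdjacentTranspositions.
Variable n : nat.
Implicit Types (P : 'S_n) (a : 'I_n) (s t : seq 'I_n).

Lemma prodw_cons a s : prodw (a :: s) = (sadj a * prodw s)%g.
Proof. by rewrite /prodw big_cons. Qed.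

Lemma prodw_rcons s a : prodw (rcons s a) = (prodw s * sadj a)%g.
Proof. by rewrite /prodw big_rcons. Qed.

Lemma prodw_cat s t : prodw (s ++ t) = (prodw s * prodw t)%g.
Proof. by rewrite /prodw big_cat. Qed.

Lemma word_ok_cat s t : word_ok (s ++ t) = word_ok s && word_ok t.
Proof. by rewrite /word_ok all_cat. Qed.

Lemma word_ok_rcons s a : word_ok (rcons s a) = word_ok s && (0 < a).
Proof. by rewrite /word_ok all_rcons andbC. Qed.

Lemma sadj2 a : (sadj a * sadj a = 1)%g.
Proof. by rewrite /sadj tperm2. Qed.

Lemma mulg_sadjK P a : (P * sadj a * sadj a = P)%g.
Proof. by rewrite -mulgA sadj2 mulg1. Qed.

Lemma sadjE a (u : 'I_n) : 0 < a ->
  nat_of_ord (sadj a u) =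
  if nat_of_ord u == a.-1 then nat_of_ord a
  else if nat_of_ord u == a then a.-1 else nat_of_ord u.
Proof.
move=> a_gt0; rewrite /sadj; case: tpermP => [->|->|].
- by rewrite eqxx.
- by rewrite ifN_eq ?eqxx //; apply/eqP => /=; lia.
- by move=> /eqP ? /eqP ?; rewrite !ifN_eq.
Qed.

End AdjacentTranspositions.

Ltac case_eqn := repeat match goal with
  | |- context [if nat_of_ord ?x == ?y then _ else _] => case: (nat_of_ord x =P y) => ? /=
  | |- context [if (nat_of_ord ?x).-1 == ?y then _ else _] =>
      case: ((nat_of_ord x).-1 =P y) => ? /=
  end.
Ltac ord_lia := apply/val_inj => /=; rewrite ?sadjE //=; case_eqn; lia.

Section AdjacentRelations.
Variable n : nat.
Implicit Types (a b : 'I_n).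

Lemma sadj_comm a b : 0 < a -> 0 < b -> a.+1 < b \/ b.+1 < a ->
  (sadj a * sadj b = sadj b * sadj a)%g.
Proof. by move=> a_gt0 b_gt0 far; apply/permP => u; rewrite !permM; ord_lia. Qed.

Lemma sadj_braid a b : 0 < a -> b = a.+1 :> nat ->
  (sadj a * sadj b * sadj a = sadj b * sadj a * sadj b)%g.
Proof.
move=> a_gt0 ba; have b_gt0 : 0 < b by lia.
by apply/permP => u; rewrite !permM; ord_lia.
Qed.

End AdjacentRelations.

(** * Length and inversions *)

Section Inversions.
Variable n : nat.
Implicit Types (P : 'S_n) (a : 'I_n) (s : seq 'I_n).

Definition inversions P : {set 'I_n * 'I_n} :=
  [set p : 'I_n * 'I_n | (p.1 < p.2) && (P p.2 < P p.1)].

Definition ninv P := #|inversions P|.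

Definition sortp (x y : 'I_n) := if x < y then (x, y) else (y, x).

(* Right multiplication by [sadj a] exchanges the values [a.-1] and [a];
   [flipped P a] is the pair of positions carrying them. *)
Definition flipped P a := sortp ((P^-1)%g (pred_ord a)) ((P^-1)%g a).

Definition descent P a := (P^-1)%g a < (P^-1)%g (pred_ord a).

Definition swaps a (u v : 'I_n) :=
  ((u == a.-1 :> nat) && (v == a :> nat)) || ((u == a :> nat) && (v == a.-1 :> nat)).

Lemma sadj_ltE a (u v : 'I_n) : 0 < a -> u != v ->
  (sadj a v < sadj a u) = (v < u) (+) swaps a u v.
Proof.
move=> a_gt0 /eqP uv; have {}uv : nat_of_ord u <> v by move/val_inj.
rewrite /swaps !sadjE //.
case: (nat_of_ord u =P a.-1) => ?; case: (nat_of_ord u =P a) => ?;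
case: (nat_of_ord v =P a.-1) => ?; case: (nat_of_ord v =P a) => ? /=;
  try lia; case: ltnP => ?; case: ltnP => ?; lia.
Qed.

Lemma eq_flipped P a p : 0 < a ->
  (p == flipped P a) = (p.1 < p.2) && swaps a (P p.1) (P p.2).
Proof.
move=> a_gt0; case: p => x y /=; rewrite /swaps.
have eq_predV z : (z == (P^-1)%g (pred_ord a)) = (P z == a.-1 :> nat).
  by rewrite -(inj_eq (@perm_inj _ P)) permKV.
have eq_aV z : (z == (P^-1)%g a) = (P z == a :> nat).
  by rewrite -(inj_eq (@perm_inj _ P)) permKV.
rewrite /flipped /sortp; set X := (P^-1)%g (pred_ord a); set Y := (P^-1)%g a.
have PX : P X = a.-1 :> nat by rewrite permKV.
have PY : P Y = a :> nat by rewrite permKV.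
have XY : X != Y by apply/eqP => /(congr1 (fun z => nat_of_ord (P z))); rewrite PX PY; lia.
case: ltnP => XltY; rewrite xpair_eqE; apply/idP/idP.
- by case/andP=> /eqP-> /eqP->; rewrite XltY PX PY !eqxx.
- case/andP=> xy /orP[/andP[Px Py] | /andP[Px Py]]; first by rewrite eq_predV eq_aV Px Py.
  move: Px Py; rewrite -eq_aV -eq_predV -/X -/Y => /eqP Ex /eqP Ey.
  by move: xy; rewrite Ex Ey; lia.
- by case/andP=> /eqP-> /eqP->; rewrite PX PY !eqxx orbT ltn_neqAle XltY eq_sym XY.
- case/andP=> xy /orP[/andP[Px Py] | /andP[Px Py]]; last by rewrite eq_predV eq_aV Px Py.
  move: Px Py; rewrite -eq_aV -eq_predV -/X -/Y => /eqP Ex /eqP Ey.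
  by move: xy; rewrite Ex Ey; lia.
Qed.

Lemma inversions_mul_sadj P a p : 0 < a ->
  (p \in inversions (P * sadj a)%g) = (p \in inversions P) (+) (p == flipped P a).
Proof.
move=> a_gt0; rewrite eq_flipped // !inE !permM.
case: ltnP => //= ltp; rewrite sadj_ltE //.
by apply: contraTneq ltp => /perm_inj->; rewrite ltnn.
Qed.

Lemma flipped_inversion P a : 0 < a -> (flipped P a \in inversions P) = descent P a.
Proof.
rewrite /flipped /descent /sortp => a_gt0.
by case: ltnP => lt; rewrite inE /= !permKV /=; apply/idP/idP => [/andP[]|]; lia.
Qed.

Lemma ninv_mul_sadj P a : 0 < a ->
  ninv (P * sadj a)%g = if descent P a then (ninv P).-1 else (ninv P).+1.
Proof.
move=> a_gt0; rewrite /ninv; have -> : inversions (P * sadj a)%g =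
    if descent P a then inversions P :\ flipped P a else flipped P a |: inversions P.
  apply/setP => p; rewrite inversions_mul_sadj // -flipped_inversion //.
  by case: ifP => fP; rewrite ?in_setD1 ?in_setU1; case: eqP => [->|_]; rewrite ?fP ?addbF /=.
rewrite -flipped_inversion //; case: ifP => fP.
- by rewrite (cardsD1 (flipped P a) (inversions P)) fP.
- by rewrite cardsU1 fP.
Qed.

Lemma ninv_mul_prodw_le P s : word_ok s -> ninv (P * prodw s)%g <= ninv P + size s.
Proof.
elim: s P => [|a s IHs] P /=; first by rewrite /prodw big_nil mulg1 addn0.
case/andP=> a_gt0 s_ok; rewrite prodw_cons mulgA.
apply: leq_trans (IHs _ s_ok) _; rewrite addnS -addSn leq_add2r ninv_mul_sadj //.
by case: descent; lia.
Qed.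

Lemma ninv1 : ninv 1%g = 0.
Proof.
by apply/eqP; rewrite cards_eq0; apply/eqP/setP => p; rewrite !inE !perm1; case: ltngtP.
Qed.

Lemma incr_perm_ge (Q : 'S_n) :
  (forall x y : 'I_n, x < y -> Q x < Q y) -> forall x : 'I_n, x <= Q x.
Proof.
move=> Q_incr [m lt_mn]; elim: m lt_mn => // m IHm lt_m1n /=.
have lt_mn : m < n by lia.
have := Q_incr (Ordinal lt_mn) (Ordinal lt_m1n) (ltnSn m); have := IHm lt_mn; rewrite /=; lia.
Qed.

Lemma incr_perm_eq1 (Q : 'S_n) : (forall x y : 'I_n, x < y -> Q x < Q y) -> Q = 1%g.
Proof.
move=> Q_incr; have QV_incr : forall x y : 'I_n, x < y -> (Q^-1)%g x < (Q^-1)%g y.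
  move=> x y lt_xy; rewrite ltnNge; apply/negP; rewrite leq_eqVlt => /orP[/eqP|].
  - by move/val_inj/perm_inj => eq_yx; rewrite eq_yx ltnn in lt_xy.
  - by move/Q_incr; rewrite !permKV; lia.
apply/permP => x; apply/val_inj; rewrite perm1 /=.
have := incr_perm_ge Q_incr x; have := incr_perm_ge QV_incr (Q x).
by rewrite permK; lia.
Qed.

Lemma no_descent_eq1 P : (forall a, 0 < a -> ~~ descent P a) -> P = 1%g.
Proof.
move=> noD; apply/eqP; rewrite -eq_invg1; apply/eqP/incr_perm_eq1 => x y.
pose g m := if @insub _ (gtn n) 'I_n m is Some z then nat_of_ord ((P^-1)%g z) else 0.
have g_ord (z : 'I_n) : g z = (P^-1)%g z by rewrite /g valK.
have g_incr : {in gtn n &, {homo g : i j / i < j}}.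
  apply: homo_ltn_in => [i j k|i j _ lt_jn k /andP[_ lt_kj]|i lt_in lt_i1n].
  - exact: ltn_trans.
  - exact: ltn_trans lt_kj lt_jn.
  have := noD (Ordinal lt_i1n) isT; rewrite /descent -leqNgt.
  have -> : pred_ord (Ordinal lt_i1n) = Ordinal lt_in by apply: val_inj.
  rewrite leq_eqVlt => /orP[/eqP/val_inj/perm_inj [] | ]; first lia.
  by rewrite /g !insubT.
by rewrite -!g_ord; apply: g_incr; rewrite inE /= ltn_ord.
Qed.

Lemma descent_ninv_gt0 P a : 0 < a -> descent P a -> 0 < ninv P.
Proof.
by move=> a_gt0; rewrite -flipped_inversion // => fP; apply/card_gt0P; exists (flipped P a).
Qed.

Definition reduced P s := [&& word_ok s, prodw s == P & size s == ninv P].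

Lemma reduced_exists P : exists s, reduced P s.
Proof.
have [k] := ubnP (ninv P); elim: k P => // k IHk P lt_Pk.
case: (pickP (fun a : 'I_n => (0 < a) && descent P a)) => [a /andP[a_gt0 dPa] | noD].
- have lt_k : ninv (P * sadj a)%g < k.
    rewrite ninv_mul_sadj // dPa; have := descent_ninv_gt0 a_gt0 dPa; lia.
  have [s /and3P[s_ok /eqP s_prod /eqP s_size]] := IHk _ lt_k.
  exists (rcons s a); rewrite /reduced word_ok_rcons prodw_rcons s_prod mulg_sadjK.
  rewrite s_ok a_gt0 size_rcons s_size ninv_mul_sadj // dPa eqxx /=.
  by have := descent_ninv_gt0 a_gt0 dPa; lia.
- have -> : P = 1%g by apply: no_descent_eq1 => a a_gt0; move: (noD a); rewrite a_gt0 => /negbT.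
  by exists [::]; rewrite /reduced /prodw big_nil ninv1 eqxx.
Qed.

Lemma ninv_le_size s : word_ok s -> ninv (prodw s) <= size s.
Proof. by move/(ninv_mul_prodw_le 1%g); rewrite mul1g ninv1. Qed.

Lemma len_ninv P : len P = ninv P.
Proof.
have [s /and3P[s_ok s_prod s_size]] := reduced_exists P.
have hasP : has_word_len P (ninv P).
  by apply/existsP; exists (Tuple s_size); rewrite /= s_ok s_prod.
rewrite /len; case: excluded_middle_informative => [ex | []]; last by exists (ninv P).
case: ex_minnP => m /existsP[t /andP[t_ok /eqP t_prod]] /(_ _ hasP).
by have := ninv_le_size t_ok; rewrite t_prod size_tuple; lia.
Qed.

End Inversions.

(** * Inversion sequences *)

Section Flips.
Variable n : nat.
Implicit Types (P : 'S_n) (a b : 'I_n) (s t : seq 'I_n).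

(* The pairs of positions successively inverted by the letters of [s] applied
   after [P]; from [P = 1] along a reduced word of [w] they are the inversions
   of [w]. *)
Fixpoint flips P s : seq ('I_n * 'I_n) :=
  if s is a :: s' then flipped P a :: flips (P * sadj a)%g s' else [::].

Lemma flips_cat P s t : flips P (s ++ t) = flips P s ++ flips (P * prodw s)%g t.
Proof.
elim: s P => [|a s IHs] P /=; first by rewrite /prodw big_nil mulg1.
by rewrite IHs prodw_cons mulgA.
Qed.

Lemma flipped_max P a : maxn (P (flipped P a).1) (P (flipped P a).2) = a.
Proof. by rewrite /flipped /sortp; case: ifP => _ /=; rewrite !permKV /=; lia. Qed.

Lemma flips_inj P s t : flips P s = flips P t -> s = t.
Proof.
elim: s P t => [|a s IHs] P [|b t] //= [eq_ab eq_st].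
have ab : a = b by apply: val_inj; rewrite /= -(flipped_max P a) -(flipped_max P b) eq_ab.
by subst b; rewrite (IHs _ _ eq_st).
Qed.

Lemma flips_uniq P s : word_ok s -> ninv (P * prodw s)%g = ninv P + size s ->
  uniq (flips P s) && all [predC inversions P] (flips P s).
Proof.
elim: s P => [|a s IHs] P //=; case/andP=> a_gt0 s_ok; rewrite prodw_cons mulgA => ninv_s.
have := ninv_mul_prodw_le (P * sadj a)%g s_ok; rewrite ninv_s ninv_mul_sadj //.
case dPa: (descent P a); first lia.
move=> _; have /andP[uniq_s new_s] : uniq (flips (P * sadj a)%g s) &&
    all [predC inversions (P * sadj a)%g] (flips (P * sadj a)%g s).
  by apply: IHs => //; rewrite ninv_s ninv_mul_sadj // dPa; lia.
have fP : flipped P a \notin inversions P by rewrite flipped_inversion // dPa.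
have sub_inv p : p \in inversions P -> p \in inversions (P * sadj a)%g.
  by move=> pP; rewrite inversions_mul_sadj // pP; case: eqP => // p_f; move: fP; rewrite -p_f pP.
rewrite /= fP uniq_s andbT /=; apply/andP; split.
- apply: contraL new_s => f_s; apply/allPn; exists (flipped P a) => //=.
  by rewrite negbK inversions_mul_sadj // (negbTE fP) eqxx.
- by apply: sub_all new_s => p /=; apply: contra; apply: sub_inv.
Qed.

Lemma reduced_uniq_flips P s : reduced P s -> uniq (flips 1 s).
Proof.
case/and3P=> s_ok /eqP s_prod /eqP s_size.
have := flips_uniq (P := 1%g) s_ok.
by rewrite mul1g ninv1 s_prod s_size => /(_ erefl)/andP[].
Qed.

Definition disjointp (c d : 'I_n * 'I_n) :=
  [&& c.1 != d.1, c.1 != d.2, c.2 != d.1 & c.2 != d.2].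

Lemma disjointpC : symmetric disjointp.
Proof.
move=> c d; rewrite /disjointp (eq_sym d.1 c.1) (eq_sym d.1) (eq_sym d.2 c.1) (eq_sym d.2).
by congr (_ && _); apply: andbCA.
Qed.

Lemma disjointp_sortp x y x' y' :
  disjointp (sortp x y) (sortp x' y') = [&& x != x', x != y', y != x' & y != y'].
Proof.
rewrite /disjointp /sortp.
by case: ifP => _; case: ifP => _ /=; do 4 case: eqP => //=; rewrite ?eqxx ?andbF //.
Qed.

Lemma permV_mul_sadj P a (u : 'I_n) : ((P * sadj a)^-1)%g u = (P^-1)%g (sadj a u).
Proof. by rewrite invMg permM /sadj tpermV. Qed.

Lemma flips_comm P a b : 0 < a -> 0 < b -> a.+1 < b \/ b.+1 < a ->
  flips P [:: b; a] = rev (flips P [:: a; b]) /\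
  {in flips P [:: a; b] &, forall c d, c != d -> disjointp c d}.
Proof.
move=> a_gt0 b_gt0 far; rewrite /= /flipped !permV_mul_sadj.
have -> : sadj a (pred_ord b) = pred_ord b by ord_lia.
have -> : sadj a b = b by ord_lia.
have -> : sadj b (pred_ord a) = pred_ord a by ord_lia.
have -> : sadj b a = a by ord_lia.
have disj : disjointp (flipped P a) (flipped P b).
  rewrite disjointp_sortp !(inj_eq perm_inj) -!val_eqE /=.
  by apply/and4P; split; apply/eqP; lia.
split => // c d; rewrite !inE => /orP[]/eqP-> /orP[]/eqP->; rewrite ?eqxx //.
by rewrite disjointpC.
Qed.

Lemma flips_braid P a b : 0 < a -> 0 < b -> b = a.+1 :> nat \/ a = b.+1 :> nat ->
  flips P [:: b; a; b] = rev (flips P [:: a; b; a]) /\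
  {in flips P [:: a; b; a] &, forall c d, ~~ disjointp c d}.
Proof.
wlog ba : a b / b = a.+1 :> nat.
  move=> braid a_gt0 b_gt0 [ba | ab]; first exact: braid a b ba a_gt0 b_gt0 (or_introl ba).
  have [-> disj] := braid b a ab b_gt0 a_gt0 (or_introl ab).
  by rewrite revK; split => // c d; rewrite !mem_rev; apply: disj.
move=> a_gt0 b_gt0 _; have pred_b : pred_ord b = a by ord_lia.
rewrite /= /flipped !permV_mul_sadj.
have -> : sadj a (pred_ord b) = pred_ord a by ord_lia.
have -> : sadj a b = b by ord_lia.
have -> : sadj a (sadj b (pred_ord a)) = a by ord_lia.
have -> : sadj a (sadj b a) = b by ord_lia.
have -> : sadj b (pred_ord a) = pred_ord a by ord_lia.
have -> : sadj b a = b by ord_lia.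
have -> : sadj b b = a by ord_lia.
rewrite pred_b; split => // c d; rewrite !inE.
by do 2 case/or3P=> /eqP->; rewrite disjointp_sortp !eqxx ?andbF.
Qed.

End Flips.

Arguments disjointp {n} c d.

Section SameOrder.
Variables (T : eqType) (R : rel T).
Implicit Types (c d e p m q : seq T).

Definition same_order c d :=
  {in c &, forall x y, R x y -> (index x c < index y c) = (index x d < index y d)}.

Lemma same_order_trans c d e : perm_eq c d ->
  same_order c d -> same_order d e -> same_order c e.
Proof.
move=> pcd ocd ode x y xc yc Rxy; rewrite ocd // ode // -(perm_mem pcd) //.
Qed.

Lemma same_order_rev p m q : {in m &, forall x y, x != y -> ~~ R x y} ->
  same_order (p ++ m ++ q) (p ++ rev m ++ q).
Proof.
move=> unrelated x y _ _ Rxy; case: (eqVneq x y) => [->|xy]; first by rewrite !ltnn.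
have index_lt z (s : seq T) : z \in s -> index z s < size s by rewrite index_mem.
rewrite !index_cat !mem_rev size_rev.
case: (boolP (x \in p)) => xp; case: (boolP (y \in p)) => yp //.
- by have := index_lt _ _ xp; case: (y \in m); lia.
- by have := index_lt _ _ yp; case: (x \in m); lia.
case: (boolP (x \in m)) => xm; case: (boolP (y \in m)) => ym.
- by have := unrelated _ _ xm ym xy; rewrite Rxy.
- have := index_lt _ _ xm; have := index_lt x (rev m); rewrite mem_rev size_rev; lia.
- have := index_lt _ _ ym; have := index_lt y (rev m); rewrite mem_rev size_rev; lia.
- by rewrite ltn_add2l.
Qed.

End SameOrder.

Lemma eq_from_index_order (T : eqType) (c d : seq T) : uniq c -> perm_eq c d ->
  {in c &, forall x y, (index x c < index y c) = (index x d < index y d)} -> c = d.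
Proof.
elim: c d => [|x c IHc] [|y d] //; try by move=> _ /perm_size.
move=> /= /andP[xc uniq_c] pcd same.
have yx : y = x.
  apply/eqP; apply: contraT => yx.
  have yc : y \in x :: c by rewrite (perm_mem pcd) mem_head.
  by have := same x y (mem_head _ _) yc; rewrite /= eqxx eq_sym (negbTE yx) /= eqxx.
subst y; congr (_ :: _); apply: IHc => //; first by rewrite perm_cons in pcd.
move=> u v uc vc; have := same u v (mem_behead (s := x :: c) uc) (mem_behead (s := x :: c) vc).
have xz z : z \in c -> (x == z) = false by move=> zc; apply: contraNF xc => /eqP->.
by rewrite /= !xz // !ltnS.
Qed.

Section Moves.
Variable n : nat.
Implicit Types (s t u v p q : seq 'I_n).

Lemma braid_move_sym s t : braid_move s t -> braid_move t s.
Proof. by case=> [p [q [a [b [ab [-> ->]]]]]]; exists p, q, b, a; split => //; lia. Qed.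

Lemma comm_move_sym s t : comm_move s t -> comm_move t s.
Proof. by case=> [p [q [a [b [ab [-> ->]]]]]]; exists p, q, b, a; split => //; lia. Qed.

Lemma flips_rev_factor (R : rel ('I_n * 'I_n)) p u v q :
  prodw u = prodw v -> flips (prodw p) v = rev (flips (prodw p) u) ->
  {in flips (prodw p) u &, forall c d, c != d -> ~~ R c d} ->
  perm_eq (flips 1 (p ++ u ++ q)) (flips 1 (p ++ v ++ q)) /\
  same_order R (flips 1 (p ++ u ++ q)) (flips 1 (p ++ v ++ q)).
Proof.
move=> uv flips_v unrelated; rewrite !flips_cat !mul1g uv flips_v.
split; last exact: same_order_rev.
by rewrite perm_cat2l perm_cat2r perm_sym perm_rev.
Qed.

Lemma flips_braid_move s t : word_ok s -> braid_move s t ->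
  perm_eq (flips 1 s) (flips 1 t) /\ same_order disjointp (flips 1 s) (flips 1 t).
Proof.
move=> s_ok [p [q [a [b [ab [es et]]]]]]; subst s t.
move: s_ok; rewrite !word_ok_cat => /and3P[_ /and4P[a_gt0 b_gt0 _ _] _].
have [flips_bab unrelated] := flips_braid (prodw p) a_gt0 b_gt0 ab.
apply: flips_rev_factor => // [|c d cR dR _]; last exact: unrelated.
rewrite !prodw_cons /prodw big_nil !mulg1 !mulgA.
by case: ab => ab; [apply: sadj_braid | apply/esym/sadj_braid].
Qed.

Lemma flips_comm_move s t : word_ok s -> comm_move s t ->
  perm_eq (flips 1 s) (flips 1 t) /\
  same_order (fun c d => ~~ disjointp c d) (flips 1 s) (flips 1 t).
Proof.
move=> s_ok [p [q [a [b [ab [es et]]]]]]; subst s t.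
move: s_ok; rewrite !word_ok_cat => /and3P[_ /and3P[a_gt0 b_gt0 _] _].
have [flips_ba unrelated] := flips_comm (prodw p) a_gt0 b_gt0 ab.
apply: flips_rev_factor => // [|c d cR dR cd]; last by rewrite negbK unrelated.
by rewrite !prodw_cons /prodw big_nil !mulg1; apply: sadj_comm.
Qed.

End Moves.

Lemma connect_same_order (T : finType) (U : eqType) (r : rel T) (f : T -> seq U)
    (R : rel U) :
  (forall x y, r x y -> perm_eq (f x) (f y) /\ same_order R (f x) (f y)) ->
  forall x y, connect r x y -> perm_eq (f x) (f y) /\ same_order R (f x) (f y).
Proof.
move=> step x y /connectP[p]; elim: p x => [|z p IHp] x /=; first by move=> _ ->.
case/andP=> /step[pxz oxz] /IHp/[apply][[pzy ozy]].
by split; [apply: perm_trans pzy | apply: same_order_trans ozy].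
Qed.

Section ReducedWords.
Variables (n : nat) (w : 'S_n).
Implicit Types (s t : (len w).-tuple 'I_n).

Lemma mem_Rw t : (t \in Rw w) = reduced w t.
Proof. by rewrite inE /reduced size_tuple -len_ninv eqxx andbT. Qed.

Lemma braid_comm_classes_inter s t : s \in Rw w ->
  connect (@braid_rel n w) s t -> connect (@comm_rel n w) s t -> s = t.
Proof.
move=> sR braid_st comm_st; set f := fun x : (len w).-tuple 'I_n => flips 1 (val x).
have [perm_st braid_order] : perm_eq (f s) (f t) /\ same_order disjointp (f s) (f t).
  apply: connect_same_order braid_st => x y; rewrite /braid_rel => /and3P[xR _ /asboolP].
  by rewrite mem_Rw in xR; case/and3P: xR => x_ok _ _; apply: flips_braid_move.
have [_ comm_order] : perm_eq (f s) (f t) /\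
    same_order (fun c d => ~~ disjointp c d) (f s) (f t).
  apply: connect_same_order comm_st => x y; rewrite /comm_rel => /and3P[xR _ /asboolP].
  by rewrite mem_Rw in xR; case/and3P: xR => x_ok _ _; apply: flips_comm_move.
apply/val_inj/(@flips_inj _ 1%g)/eq_from_index_order => //.
- by apply: (@reduced_uniq_flips _ w); rewrite -mem_Rw.
- move=> x y xs ys; case: (boolP (disjointp x y)) => disj; first exact: braid_order.
  exact: comm_order.
Qed.

End ReducedWords.

(** * Matsumoto's theorem *)

Section Matsumoto.
Variable n : nat.
Implicit Types (P Q : 'S_n) (a b : 'I_n) (s t u v : seq 'I_n).

Lemma reduced_cat P Q u v : reduced Q u -> word_ok v -> (Q * prodw v)%g = P ->
  ninv P = ninv Q + size v -> reduced P (u ++ v).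
Proof.
case/and3P=> u_ok /eqP<- /eqP u_size v_ok <- ninv_v.
by rewrite /reduced word_ok_cat u_ok v_ok prodw_cat size_cat u_size ninv_v !eqxx.
Qed.

Lemma reduced_rcons P s a : reduced P (rcons s a) ->
  [/\ 0 < a, descent P a & reduced (P * sadj a)%g s].
Proof.
case/and3P; rewrite word_ok_rcons prodw_rcons size_rcons.
move=> /andP[s_ok a_gt0] /eqP s_prod /eqP s_size.
have prod_s : prodw s = (P * sadj a)%g by rewrite -s_prod mulg_sadjK.
have := ninv_le_size s_ok; rewrite prod_s ninv_mul_sadj //.
case dPa: (descent P a); last lia.
by move=> _; rewrite /reduced s_ok prod_s ninv_mul_sadj // dPa -s_size !eqxx.
Qed.

Lemma reduced_rcons_descent P s a : 0 < a -> descent P a ->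
  reduced (P * sadj a)%g s -> reduced P (rcons s a).
Proof.
move=> a_gt0 dPa s_red; rewrite -cats1; apply: (reduced_cat s_red).
- by rewrite /word_ok /= a_gt0.
- by rewrite /prodw big_seq1 mulg_sadjK.
- rewrite ninv_mul_sadj // dPa; have := descent_ninv_gt0 a_gt0 dPa; rewrite /=; lia.
Qed.

Lemma descent_mul_sadj_far P a b : 0 < a -> 0 < b -> a.+1 < b \/ b.+1 < a ->
  descent (P * sadj a)%g b = descent P b.
Proof.
move=> a_gt0 b_gt0 far; rewrite /descent !permV_mul_sadj.
have -> : sadj a b = b by ord_lia.
by have -> : sadj a (pred_ord b) = pred_ord b by ord_lia.
Qed.

Lemma descent_mul_sadj_adj P a b : 0 < a -> b = a.+1 :> nat ->
  descent P a -> descent P b ->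
  descent (P * sadj a)%g b /\ descent (P * sadj a * sadj b)%g a.
Proof.
move=> a_gt0 ba; have b_gt0 : 0 < b by lia.
rewrite /descent !permV_mul_sadj.
have -> : sadj b a = b by ord_lia.
have -> : sadj b (pred_ord a) = pred_ord a by ord_lia.
have -> : sadj a b = b by ord_lia.
have -> : pred_ord b = a by ord_lia.
rewrite /sadj tpermR tpermL; lia.
Qed.

Lemma reduced_comm_suffix P a b : 0 < a -> 0 < b -> a.+1 < b \/ b.+1 < a ->
  descent P a -> descent P b ->
  exists u, reduced P (u ++ [:: b; a]) /\ reduced P (u ++ [:: a; b]).
Proof.
move=> a_gt0 b_gt0 far dPa dPb.
have dPab : descent (P * sadj a)%g b by rewrite descent_mul_sadj_far.
have [u u_red] := reduced_exists (P * sadj a * sadj b)%g.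
have ninv_u : ninv P = ninv (P * sadj a * sadj b)%g + 2.
  rewrite !ninv_mul_sadj // dPa dPab.
  have := descent_ninv_gt0 b_gt0 dPab; rewrite ninv_mul_sadj // dPa; lia.
have ok2 (x y : 'I_n) : 0 < x -> 0 < y -> word_ok [:: x; y] by rewrite /word_ok /= => -> ->.
exists u; split; apply: (reduced_cat u_red) => //; rewrite ?ok2 // /prodw !big_cons big_nil.
- by rewrite !mulg1 mulgA mulg_sadjK mulg_sadjK.
- by rewrite !mulg1 (sadj_comm a_gt0 b_gt0 far) !mulgA !mulg_sadjK.
Qed.

Lemma reduced_braid_suffix P a b : 0 < a -> 0 < b -> b = a.+1 :> nat \/ a = b.+1 :> nat ->
  descent P a -> descent P b ->
  exists u, reduced P (u ++ [:: a; b; a]) /\ reduced P (u ++ [:: b; a; b]).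
Proof.
wlog ba : a b / b = a.+1 :> nat.
  move=> braid a_gt0 b_gt0 [ba | ab] dPa dPb.
    exact: braid a b ba a_gt0 b_gt0 (or_introl ba) dPa dPb.
  by have [u [u_bab u_aba]] := braid b a ab b_gt0 a_gt0 (or_introl ab) dPb dPa; exists u.
move=> a_gt0 b_gt0 _ dPa dPb.
have [dPab dPaba] := descent_mul_sadj_adj a_gt0 ba dPa dPb.
have [u u_red] := reduced_exists (P * sadj a * sadj b * sadj a)%g.
have ninv_u : ninv P = ninv (P * sadj a * sadj b * sadj a)%g + 3.
  rewrite !ninv_mul_sadj // dPa dPab dPaba.
  have := descent_ninv_gt0 a_gt0 dPaba; have := descent_ninv_gt0 b_gt0 dPab.
  rewrite !ninv_mul_sadj // dPa dPab; lia.
have ok3 (x y : 'I_n) : 0 < x -> 0 < y -> word_ok [:: x; y; x] by rewrite /word_ok /= => -> ->.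
exists u; split; apply: (reduced_cat u_red) => //; rewrite ?ok3 // /prodw !big_cons big_nil.
- by rewrite !mulg1 !mulgA !mulg_sadjK.
- by rewrite !mulg1 [(sadj b * _)%g]mulgA -(sadj_braid a_gt0 ba) !mulgA !mulg_sadjK.
Qed.

Definition move_rel P s t : Prop :=
  [/\ reduced P s, reduced P t & braid_move s t \/ comm_move s t].

Definition moves P := clos_refl_trans (seq 'I_n) (move_rel P).

Lemma moves_sym P s t : moves P s t -> moves P t s.
Proof.
elim=> [x y [x_red y_red xy] | x | x y z _ xy _ yz].
- apply: rt_step; split => //.
  by case: xy => xy; [left; apply: braid_move_sym | right; apply: comm_move_sym].
- exact: rt_refl.
- exact: rt_trans yz xy.
Qed.

Lemma moves_rcons P s t a : 0 < a -> descent P a ->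
  moves (P * sadj a)%g s t -> moves P (rcons s a) (rcons t a).
Proof.
move=> a_gt0 dPa; elim=> [x y [x_red y_red xy] | x | x y z _ xy _ yz].
- apply: rt_step; split; try exact: reduced_rcons_descent.
  case: xy => [[p [q [b [c [bc [-> ->]]]]]] | [p [q [b [c [bc [-> ->]]]]]]].
  + by left; exists p, (rcons q a), b, c; rewrite !rcons_cat.
  + by right; exists p, (rcons q a), b, c; rewrite !rcons_cat.
- exact: rt_refl.
- exact: rt_trans xy yz.
Qed.

Theorem matsumoto P s t : reduced P s -> reduced P t -> moves P s t.
Proof.
have [k] := ubnP (ninv P); elim: k P s t => // k IHk P s t lt_Pk s_red t_red.
have : size s = size t by case/and3P: s_red => _ _ /eqP->; case/and3P: t_red => _ _ /eqP->.
case/lastP: s s_red => [|s a] s_red; case/lastP: t t_red => [|t b] t_red;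
  rewrite ?size_rcons // => _; first exact: rt_refl.
have [a_gt0 dPa s_red'] := reduced_rcons s_red.
have [b_gt0 dPb t_red'] := reduced_rcons t_red.
have IH_at (x : 'I_n) : 0 < x -> descent P x -> forall u v, reduced (P * sadj x)%g u ->
    reduced (P * sadj x)%g v -> moves P (rcons u x) (rcons v x).
  move=> x_gt0 dPx u v u_red v_red; apply: moves_rcons => //; apply: IHk u_red v_red.
  by rewrite ninv_mul_sadj // dPx; have := descent_ninv_gt0 x_gt0 dPx; lia.
have [eq_ab | neq_ab] := eqVneq a b; first by subst b; apply: IH_at.
have join x y : reduced P (rcons x a) -> reduced P (rcons y b) ->
    braid_move (rcons x a) (rcons y b) \/ comm_move (rcons x a) (rcons y b) ->
    moves P (rcons s a) (rcons t b).
  move=> x_red y_red xy; apply: (rt_trans _ _ _ (rcons x a)).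
    by apply: IH_at => //; case: (reduced_rcons x_red).
  apply: (rt_trans _ _ _ (rcons y b)); first exact: rt_step.
  by apply/moves_sym/IH_at => //; case: (reduced_rcons y_red).
have [far | adj] : (a.+1 < b \/ b.+1 < a) \/ (b = a.+1 :> nat \/ a = b.+1 :> nat).
  by have /eqP : nat_of_ord a != b := neq_ab; lia.
- have [u []] := reduced_comm_suffix a_gt0 b_gt0 far dPa dPb.
  have rcons2 x y : u ++ [:: x; y] = rcons (rcons u x) y by rewrite -!cats1 -catA.
  rewrite !rcons2 => u_ba u_ab; apply: join u_ba u_ab _; right; exists u, [::], b, a.
  by rewrite -!rcons2; split => //; case: far; [right | left].
- have [u []] := reduced_braid_suffix a_gt0 b_gt0 adj dPa dPb.
  have rcons3 x y : u ++ [:: x; y; x] = rcons (u ++ [:: x; y]) x by rewrite -cats1 -catA.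
  rewrite !rcons3 => u_aba u_bab; apply: join u_aba u_bab _; left; exists u, [::], a, b.
  by rewrite -!rcons3.
Qed.

End Matsumoto.

(** * Connected graphs with one edge fewer than vertices *)

Section EdgeLists.
Variable T : finType.
Implicit Types (s : seq (T * T)) (e : T * T) (u v x y : T).

Definition adj s : rel T := fun x y => ((x, y) \in s) || ((y, x) \in s).

Lemma adj_sym s : symmetric (adj s).
Proof. by move=> x y; rewrite /adj orbC. Qed.

Lemma connect_adjC s x y : connect (adj s) x y = connect (adj s) y x.
Proof. exact: (sym_connect_sym (@adj_sym s)). Qed.

Lemma connect_adj_sub s s' x y : {subset s <= s'} ->
  connect (adj s) x y -> connect (adj s') x y.
Proof.
move=> sub_s; move: x y; apply: connect_sub => x y /orP[] xy; apply: connect1;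
  by rewrite /adj (sub_s _ xy) ?orbT.
Qed.

Lemma connect_adj_cons e s x y : connect (adj s) x y -> connect (adj (e :: s)) x y.
Proof. by apply: connect_adj_sub => z zs; rewrite in_cons zs orbT. Qed.

Lemma connect_adj_edge u v s : connect (adj ((u, v) :: s)) u v.
Proof. by apply: connect1; rewrite /adj mem_head. Qed.

Lemma connect_adj_consP u v s x y : connect (adj ((u, v) :: s)) x y ->
  [\/ connect (adj s) x y, connect (adj s) x u /\ connect (adj s) v y
    | connect (adj s) x v /\ connect (adj s) u y].
Proof.
case/connectP=> p; elim: p x => [|z p IHp] x /=; first by move=> _ ->; constructor 1.
case/andP=> xz /IHp/[apply] zy.
have [xz_s | xz_new] := boolP (adj s x z).
- have c_xz : connect (adj s) x z := connect1 xz_s.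
  case: zy => [c_zy | [c_zu c_vy] | [c_zv c_uy]].
  + by constructor 1; apply: connect_trans c_zy.
  + by constructor 2; split => //; apply: connect_trans c_zu.
  + by constructor 3; split => //; apply: connect_trans c_zv.
move: zy; have [[-> ->] | [-> ->]] : x = u /\ z = v \/ x = v /\ z = u.
  move: xz xz_new; rewrite /adj !in_cons !xpair_eqE.
  by case/orP=> [/orP[/andP[/eqP-> /eqP->] | ->] | /orP[/andP[/eqP-> /eqP->] | ->]];
    rewrite ?orbT //; [left | right].
- case=> [c_vy | [c_vu c_vy] | [_ c_uy]]; [by constructor 2 | | by constructor 1].
  by constructor 1; apply: connect_trans c_vy; rewrite connect_adjC.
- case=> [c_uy | [_ c_vy] | [c_uv c_uy]]; [by constructor 3 | by constructor 1 |].
  by constructor 1; apply: connect_trans c_uy; rewrite connect_adjC.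
Qed.

Fixpoint nspan s : nat :=
  if s is e :: s' then nspan s' + ~~ connect (adj s') e.1 e.2 else 0.

Lemma nspan_le s : nspan s <= size s.
Proof. by elim: s => //= e s IHs; case: connect => /=; lia. Qed.

Definition has_cycle s :=
  exists p : seq T, [/\ 3 <= size p, uniq p & path.cycle (adj s) p].

Definition has_redundant_edge s :=
  exists2 e, e \in s & connect (adj (rem e s)) e.1 e.2.

Lemma nspan_lt_redundant s : uniq s -> nspan s < size s -> has_redundant_edge s.
Proof.
elim: s => [|e s IHs] //= /andP[es uniq_s].
have [c_e | _] /= := boolP (connect (adj s) e.1 e.2).
  by move=> _; exists e; rewrite ?mem_head //= eqxx.
rewrite addn1 ltnS => /(IHs uniq_s)[f fs c_f]; exists f; first by rewrite in_cons fs orbT.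
have -> : rem f (e :: s) = e :: rem f s by rewrite /= ifN //; apply: contraNneq es => ->.
exact: connect_adj_cons.
Qed.

Lemma redundant_nspan_lt s : uniq s -> has_redundant_edge s -> nspan s < size s.
Proof.
elim: s => [_ [e] //|f s IHs] /= /andP[fs uniq_s] [e es c_e].
have := nspan_le s; have [eq_ef | ef] := eqVneq e f.
  by subst f; rewrite rem_cons eqxx in c_e; rewrite c_e /=; lia.
have es' : e \in s by move: es; rewrite in_cons (negbTE ef).
move: c_e; rewrite rem_cons eq_sym (negbTE ef) => /connect_adj_consP.
have sub : {subset rem e s <= s} by move=> z; apply: mem_rem.
have c_e : connect (adj s) e.1 e.2 by apply: connect1; rewrite /adj -surjective_pairing es'.
have c_e' : connect (adj s) e.2 e.1 by rewrite connect_adjC.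
case=> [c_rem | [c_1 c_2] | [c_1 c_2]].
- by have := IHs uniq_s (ex_intro2 _ _ e es' c_rem); lia.
- move: c_1 c_2 => /(connect_adj_sub sub) c_1 /(connect_adj_sub sub) c_2.
  rewrite connect_adjC in c_1; rewrite connect_adjC in c_2.
  by rewrite (connect_trans c_1 (connect_trans c_e c_2)) /=; lia.
- move: c_1 c_2 => /(connect_adj_sub sub) c_1 /(connect_adj_sub sub) c_2.
  by rewrite (connect_trans c_2 (connect_trans c_e' c_1)) /=; lia.
Qed.

Lemma adj_rem s e x y : uniq s -> adj s x y -> (x, y) != e -> (y, x) != e ->
  adj (rem e s) x y.
Proof.
by move=> uniq_s; rewrite /adj !(mem_rem_uniq _ uniq_s) !inE => /orP[] -> -> ->; rewrite ?orbT.
Qed.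

Lemma cycle_redundant s : uniq s -> has_cycle s -> has_redundant_edge s.
Proof.
move=> uniq_s [[|x0 [|x1 [|y p]]] [//= _ uniq_p]] /and3P[a01 a1y a_p].
move: uniq_p; rewrite /= !inE !negb_or.
move=> /andP[/and3P[x01 x0y x0p] /andP[/andP[x1y x1p] /andP[yp _]]].
pose e := if (x0, x1) \in s then (x0, x1) else (x1, x0).
have es : e \in s by rewrite /e; case: ifP => // e_new; move: a01; rewrite /adj e_new.
have not_e a b : x1 != a -> x1 != b -> ((a, b) != e) && ((b, a) != e).
  move=> ax1 bx1; rewrite /e; case: ifP => _; rewrite !xpair_eqE;
  by rewrite ?[_ == x1]eq_sym (negbTE ax1) (negbTE bx1) ?andbF.
have path_rem a q : path (adj s) a q -> x1 \notin a :: q -> path (adj (rem e s)) a q.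
  elim: q a => [|b q IHq] a //= /andP[a_ab a_q]; rewrite !inE !negb_or => /and3P[ax1 bx1 qx1].
  have /andP[ne_ab ne_ba] := not_e a b ax1 bx1.
  by rewrite adj_rem // IHq // inE negb_or bx1.
have c_x10 : connect (adj (rem e s)) x1 x0.
  apply/connectP; exists (y :: rcons p x0); last by rewrite /= last_rcons.
  rewrite /= adj_rem //; last 2 first.
  1, 2: by rewrite /e; case: ifP => _; rewrite xpair_eqE negb_and
           ?(eq_sym x1 x0) ?x01 ?(eq_sym y) ?x0y ?x1y ?orbT.
  by apply: path_rem; rewrite // inE mem_rcons inE !negb_or x1y x1p eq_sym x01.
exists e => //; move: c_x10; rewrite /e.
by case: ifP => _ /=; rewrite // connect_adjC.
Qed.

Lemma redundant_cycle s : uniq s ->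
  {in s, forall e, (e.1 != e.2) && ((e.2, e.1) \notin s)} ->
  has_redundant_edge s -> has_cycle s.
Proof.
move=> uniq_s simple [e es /connectP[p a_p last_p]].
have /andP[loopfree no_rev] := simple e es.
case/shortenP: a_p last_p => [[|z1 [|z2 q]] a_q uniq_q _ last_q].
- by rewrite /= in last_q; rewrite last_q eqxx in loopfree.
- rewrite /= in last_q; subst z1; move: a_q; rewrite /= andbT /adj !(mem_rem_uniq _ uniq_s).
  by rewrite !inE -surjective_pairing eqxx (negbTE no_rev) andbF.
exists [:: e.1, z1, z2 & q]; split => //.
rewrite /path.cycle rcons_path; apply/andP; split.
- by apply: sub_path a_q => x y /orP[] /mem_rem xy; rewrite /adj xy ?orbT.
- by rewrite -last_q /adj -surjective_pairing es orbT.
Qed.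

Variable V : {set T}.

Definition comp s x := [set y in V | connect (adj s) x y].
Definition ncomp s := #|[set comp s x | x in V]|.

Lemma comp_eq s x y : connect (adj s) x y -> comp s x = comp s y.
Proof.
move=> c_xy; apply/setP => z; rewrite !inE; case: (z \in V) => //=.
apply/idP/idP; last exact: connect_trans.
by apply: connect_trans; rewrite connect_adjC.
Qed.

Lemma mem_comp s x : x \in V -> x \in comp s x.
Proof. by move=> xV; rewrite inE xV connect0. Qed.

Lemma ncomp_nil : ncomp [::] = #|V|.
Proof.
rewrite /ncomp card_in_imset // => x y xV yV eq_xy.
by move: (mem_comp [::] xV); rewrite eq_xy inE => /andP[_ /connectP[[|z p] /= _ -> //]].
Qed.

Lemma comp_cons_connected u v s : connect (adj s) u v -> comp ((u, v) :: s) =1 comp s.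
Proof.
move=> c_uv x; apply/setP => y; rewrite !inE; congr (_ && _).
apply/idP/idP; last exact: connect_adj_cons.
case/connect_adj_consP => [// | [c_xu c_vy] | [c_xv c_uy]].
- exact: connect_trans c_xu (connect_trans c_uv c_vy).
- by apply: connect_trans c_xv (connect_trans _ c_uy); rewrite connect_adjC.
Qed.

Lemma comp_cons_merge u v s x : x \in V ->
  comp ((u, v) :: s) x =
  if x \in comp s u :|: comp s v then comp s u :|: comp s v else comp s x.
Proof.
move=> xV; apply/setP => y; rewrite !inE xV /=.
have c_new := connect_adj_edge u v s.
have lift := @connect_adj_cons (u, v) s.
case: ifP => [c_x | /norP[n_ux n_vx]]; rewrite ?inE; case: (y \in V) => //=.
- have c_xuv : connect (adj ((u, v) :: s)) x u /\ connect (adj ((u, v) :: s)) x v.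
    case/orP: c_x => c_x; rewrite !(connect_adjC _ x).
    + split; first exact: lift.
      by apply: (connect_trans _ (lift _ _ c_x)); rewrite connect_adjC.
    + by split; [apply: (connect_trans c_new (lift _ _ c_x)) | apply: lift].
  apply/idP/orP => [|[] /lift]; last by apply: connect_trans; case: c_xuv.
  + case/connect_adj_consP => [c_xy | [_ c_vy] | [_ c_uy]]; [| by right | by left].
    by case/orP: c_x => c_x; [left | right]; apply: connect_trans c_x c_xy.
  + by apply: connect_trans; case: c_xuv.
- apply/idP/idP; last exact: lift.
  case/connect_adj_consP => [// | [c_xu _] | [c_xv _]].
  + by rewrite connect_adjC c_xu in n_ux.
  + by rewrite connect_adjC c_xv in n_vx.
Qed.

Lemma comp_memE s x y : x \in V -> (x \in comp s y) = (comp s x == comp s y).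
Proof.
move=> xV; apply/idP/eqP => [|<-]; last exact: mem_comp.
by rewrite inE => /andP[_ c_yx]; rewrite (comp_eq c_yx).
Qed.

Lemma ncomp_cons u v s : u \in V -> v \in V ->
  ncomp ((u, v) :: s) + ~~ connect (adj s) u v = ncomp s.
Proof.
move=> uV vV; have [c_uv | nc_uv] /= := boolP (connect (adj s) u v).
  by rewrite addn0 /ncomp (eq_imset _ (comp_cons_connected c_uv)).
set C := [set comp s x | x in V]; set cu := comp s u; set cv := comp s v.
have cu_cv : cu != cv.
  apply: contraNneq nc_uv => eq_uv; have : v \in cu by rewrite eq_uv mem_comp.
  by rewrite inE => /andP[].
have cuC : cu \in C by apply: imset_f.
have cvC : cv \in C by apply: imset_f.
have merged : [set comp ((u, v) :: s) x | x in V] = (cu :|: cv) |: (C :\ cu :\ cv).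
  apply/setP => K; apply/imsetP/setU1P => [[x xV ->] | ].
  - rewrite comp_cons_merge //; case: ifP => [_|]; [by left | rewrite inE !comp_memE //].
    by case/norP=> xu xv; right; rewrite !inE xu xv imset_f.
  - case=> [-> | ]; first by exists u; rewrite // comp_cons_merge // inE mem_comp.
    rewrite !inE => /and3P[Kv Ku /imsetP[x xV eqK]]; exists x; rewrite // comp_cons_merge //.
    by rewrite inE !comp_memE // -eqK (negbTE Ku) (negbTE Kv).
have fresh : cu :|: cv \notin C :\ cu :\ cv.
  rewrite !inE; apply/negP => /and3P[_ ne_cu /imsetP[x xV eq_x]].
  have : u \in comp s x by rewrite -eq_x inE mem_comp.
  by rewrite comp_memE // eq_sym -eq_x (negbTE ne_cu).
rewrite /ncomp merged cardsU1 fresh /= -/C.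
rewrite (cardsD1 cu C) cuC (cardsD1 cv (C :\ cu)) !inE eq_sym cu_cv cvC /=; lia.
Qed.

Lemma ncomp_nspan s : {in s, forall e, (e.1 \in V) && (e.2 \in V)} ->
  ncomp s + nspan s = #|V|.
Proof.
elim: s => [|[u v] s IHs] sV /=; first by rewrite ncomp_nil addn0.
have /andP[uV vV] := sV _ (mem_head _ _).
rewrite addnCA ncomp_cons // addnC IHs // => e es.
by apply: sV; rewrite in_cons es orbT.
Qed.

Lemma ncomp_connected s x : x \in V ->
  {in V &, forall y z, connect (adj s) y z} -> ncomp s = 1.
Proof.
move=> xV conn; rewrite /ncomp -(cards1 (comp s x)); apply: eq_card => K.
rewrite inE; apply/imsetP/eqP => [[y yV ->] | ->]; last by exists x.
exact: comp_eq (conn _ _ yV xV).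
Qed.

Lemma acyclic_iff_size s : uniq s ->
  {in s, forall e, [&& e.1 \in V, e.2 \in V, e.1 != e.2 & (e.2, e.1) \notin s]} ->
  {in V &, forall x y, connect (adj s) x y} ->
  ~ has_cycle s <-> size s = #|V| - 1.
Proof.
move=> uniq_s simple conn.
have [V0 | [x xV]] := set_0Vmem V.
  case: s uniq_s simple {conn} => [|e s] _ simple; last first.
    by have := simple e (mem_head _ _); rewrite V0 inE.
  by rewrite V0 cards0; split => // _ [[|a [|b p]] []].
have ends_V : {in s, forall e, (e.1 \in V) && (e.2 \in V)}.
  by move=> e /simple/and4P[-> -> _ _].
have simple' : {in s, forall e, (e.1 != e.2) && ((e.2, e.1) \notin s)}.
  by move=> e /simple/and4P[_ _ -> ->].
have := ncomp_nspan ends_V; rewrite (ncomp_connected xV conn).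
have := nspan_le s.
split => [acyclic | size_s cyc].
- suff : ~ nspan s < size s by lia.
  by move/(nspan_lt_redundant uniq_s)/(redundant_cycle uniq_s simple').
- by have := redundant_nspan_lt uniq_s (cycle_redundant uniq_s cyc); lia.
Qed.

End EdgeLists.

(** * The graph Gamma(w) *)

Section ConnectClasses.
Variables (T : finType) (r : rel T) (D : {set T}).
Hypothesis r_sym : symmetric r.

Local Notation classes := (equivalence_partition (connect r) D).

Lemma connect_equivalence : {in D & &, equivalence_rel (connect r)}.
Proof.
move=> x y z _ _ _; split; first exact: connect0.
move=> c_xy; apply/idP/idP; last exact: connect_trans.
by apply: connect_trans; rewrite (sym_connect_sym r_sym).
Qed.

Lemma partition_classes : partition classes D.
Proof. exact: equivalence_partitionP connect_equivalence. Qed.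

Lemma cover_classes : cover classes = D.
Proof. by case/and3P: partition_classes => /eqP. Qed.

Lemma pblock_classes x : x \in D -> pblock classes x \in classes.
Proof. by move=> xD; apply: pblock_mem; rewrite cover_classes. Qed.

Lemma mem_pblock_classes x : x \in D -> x \in pblock classes x.
Proof. by move=> xD; rewrite mem_pblock cover_classes. Qed.

Lemma pblock_classesE x y : x \in D -> y \in D -> (y \in pblock classes x) = connect r x y.
Proof. by move=> xD yD; rewrite (pblock_equivalence_partition connect_equivalence). Qed.

Lemma mem_classes B x : B \in classes -> x \in B -> x \in D /\ pblock classes x = B.
Proof.
move=> BP xB; have /and3P[_ triv _] := partition_classes.
split; last exact: def_pblock.
by rewrite -cover_classes; apply/bigcupP; exists B.
Qed.

Lemma classes_nonempty B : B \in classes -> exists2 x, x \in D & pblock classes x = B.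
Proof.
move=> BP; have /and3P[_ _ B0] := partition_classes.
have /set0Pn[x xB] : B != set0 by apply: contraNneq B0 => <-.
by have [xD eqB] := mem_classes BP xB; exists x.
Qed.

End ConnectClasses.

Section Gamma.
Variables (n : nat) (w : 'S_n).
Local Notation word := ((len w).-tuple 'I_n).
Local Notation braid := (@braid_rel n w).
Local Notation comm := (@comm_rel n w).
Implicit Types (t : word) (B C : {set word}).

Lemma braid_rel_sym : symmetric braid.
Proof.
by move=> x y; apply/and3P/and3P => -[xR yR /asboolP/braid_move_sym xy];
  split => //; apply/asboolP.
Qed.

Lemma comm_rel_sym : symmetric comm.
Proof.
by move=> x y; apply/and3P/and3P => -[xR yR /asboolP/comm_move_sym xy];
  split => //; apply/asboolP.
Qed.

Definition bclass t := pblock (Bw w) t.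
Definition cclass t := pblock (Cw w) t.

Lemma bclass_mem t : t \in Rw w -> bclass t \in Bw w.
Proof. exact: (pblock_classes braid_rel_sym). Qed.

Lemma cclass_mem t : t \in Rw w -> cclass t \in Cw w.
Proof. exact: (pblock_classes comm_rel_sym). Qed.

Lemma mem_bclass t : t \in Rw w -> t \in bclass t.
Proof. exact: (mem_pblock_classes braid_rel_sym). Qed.

Lemma mem_cclass t : t \in Rw w -> t \in cclass t.
Proof. exact: (mem_pblock_classes comm_rel_sym). Qed.

Lemma bclassE t t' : t \in Rw w -> t' \in Rw w -> (t' \in bclass t) = connect braid t t'.
Proof. exact: (pblock_classesE braid_rel_sym). Qed.

Lemma cclassE t t' : t \in Rw w -> t' \in Rw w -> (t' \in cclass t) = connect comm t t'.
Proof. exact: (pblock_classesE comm_rel_sym). Qed.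

Lemma mem_Bw B t : B \in Bw w -> t \in B -> t \in Rw w /\ bclass t = B.
Proof. exact: (mem_classes braid_rel_sym). Qed.

Lemma mem_Cw C t : C \in Cw w -> t \in C -> t \in Rw w /\ cclass t = C.
Proof. exact: (mem_classes comm_rel_sym). Qed.

Lemma Bw_nonempty B : B \in Bw w -> exists2 t, t \in Rw w & bclass t = B.
Proof. exact: (classes_nonempty braid_rel_sym). Qed.

Lemma Cw_nonempty C : C \in Cw w -> exists2 t, t \in Rw w & cclass t = C.
Proof. exact: (classes_nonempty comm_rel_sym). Qed.

Definition gamma_edges : seq (Gvert w * Gvert w) :=
  [seq (inl (bclass t), inr (cclass t)) | t <- enum (Rw w)].

Definition gamma_vertices : {set Gvert w} := inl @: Bw w :|: inr @: Cw w.

Lemma size_gamma_edges : size gamma_edges = #|Rw w|.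
Proof. by rewrite size_map cardE. Qed.

Lemma uniq_gamma_edges : uniq gamma_edges.
Proof.
rewrite map_inj_in_uniq ?enum_uniq // => t t'; rewrite !mem_enum => tR t'R [eqB eqC].
apply: (braid_comm_classes_inter tR).
- by rewrite -bclassE // eqB mem_bclass.
- by rewrite -cclassE // eqC mem_cclass.
Qed.

Lemma mem_gamma_edges B C :
  ((inl B, inr C) \in gamma_edges) = [&& B \in Bw w, C \in Cw w & B :&: C != set0].
Proof.
apply/mapP/and3P => [[t] | [BB CC /set0Pn[t]]].
- rewrite mem_enum => tR [-> ->]; split; [exact: bclass_mem | exact: cclass_mem |].
  by apply/set0Pn; exists t; rewrite inE mem_bclass ?mem_cclass.
- rewrite inE => /andP[tB tC]; have [tR <-] := mem_Bw BB tB; have [_ <-] := mem_Cw CC tC.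
  by exists t; rewrite ?mem_enum.
Qed.

Lemma gamma_edgeP (x y : Gvert w) : (x, y) \in gamma_edges ->
  exists B C, x = inl B /\ y = inr C.
Proof. by case/mapP=> t _ [-> ->]; exists (bclass t), (cclass t). Qed.

Lemma Gadj_gamma : @Gadj n w =2 adj gamma_edges.
Proof.
have no_edge (x y : Gvert w) : (forall B C, x = inl B -> y = inr C -> False) ->
    ((x, y) \in gamma_edges) = false.
  by move=> no; apply: negbTE; apply/negP => /gamma_edgeP[B [C [xB yC]]]; apply: (no B C).
move=> [B | C] [B' | C']; rewrite /adj /= ?mem_gamma_edges ?no_edge //.
by rewrite orbF.
Qed.

Lemma gamma_edges_simple : {in gamma_edges, forall e,
  [&& e.1 \in gamma_vertices, e.2 \in gamma_vertices, e.1 != e.2 & (e.2, e.1) \notin gamma_edges]}.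
Proof.
move=> e /mapP[t]; rewrite mem_enum => tR -> /=.
rewrite !inE (mem_imset _ _ inl_inj) (mem_imset _ _ inr_inj) bclass_mem ?cclass_mem ?orbT //=.
by apply/negP => /gamma_edgeP[B [C [eB eC]]].
Qed.

Lemma card_gamma_vertices : #|gamma_vertices| = #|Bw w| + #|Cw w|.
Proof.
rewrite cardsU (card_imset _ (@inl_inj _ _)) (card_imset _ (@inr_inj _ _)).
suff -> : inl @: Bw w :&: inr @: Cw w = set0 :> {set Gvert w} by rewrite cards0 subn0.
by apply/setP => x; rewrite !inE; apply/negP => /andP[/imsetP[B _ ->] /imsetP[]].
Qed.

Lemma moves_tuple (x y : seq 'I_n) : moves w x y ->
  forall t, val t = x -> exists2 t', val t' = y & connect [rel a b | braid a b || comm a b] t t'.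
Proof.
elim=> [{}x {}y [x_red y_red xy] | {}x | {}x z {}y _ IHxz _ IHzy] t tx.
- have y_size : size y == len w by case/and3P: y_red => _ _; rewrite len_ninv.
  have tR : t \in Rw w by rewrite mem_Rw tx.
  have yR : Tuple y_size \in Rw w by rewrite mem_Rw.
  exists (Tuple y_size) => //; apply: connect1; rewrite /= /braid_rel /comm_rel tR yR /= tx.
  by case: xy => xy; apply/orP; [left | right]; apply/asboolP.
- by exists t.
- have [t1 t1z c_t1] := IHxz t tx; have [t2 t2y c_t2] := IHzy t1 t1z.
  by exists t2 => //; apply: connect_trans c_t1 c_t2.
Qed.

Lemma gamma_edge t : t \in Rw w -> adj gamma_edges (inl (bclass t)) (inr (cclass t)).
Proof. by move=> tR; rewrite /adj map_f ?mem_enum. Qed.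

Lemma bclass_connected t t' : t \in Rw w -> t' \in Rw w ->
  connect (adj gamma_edges) (inl (bclass t)) (inl (bclass t')).
Proof.
move=> tR t'R; have [t'' /val_inj-> c_tt'] : exists2 t'', val t'' = val t' &
    connect [rel a b | braid a b || comm a b] t t''.
  by apply: moves_tuple (erefl (val t)); apply: matsumoto; rewrite -mem_Rw.
case/connectP: c_tt' => p; elim: p t tR => [|t1 p IHp] t tR /=; first by move=> _ ->.
case/andP=> /orP[step | step] p_path last_p; have /and3P[_ t1R _] := step.
- have [_ <-] : t1 \in Rw w /\ bclass t1 = bclass t.
    by apply: mem_Bw (bclass_mem tR) _; rewrite bclassE // connect1.
  exact: IHp.
- have [_ eqC] : t1 \in Rw w /\ cclass t1 = cclass t.
    by apply: mem_Cw (cclass_mem tR) _; rewrite cclassE // connect1.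
  apply: connect_trans (IHp _ t1R p_path last_p).
  apply: (connect_trans (connect1 (gamma_edge tR))).
  by rewrite -eqC connect_adjC connect1 ?gamma_edge.
Qed.

Lemma gamma_vertex_bclass x : x \in gamma_vertices ->
  exists2 t, t \in Rw w & connect (adj gamma_edges) (inl (bclass t)) x.
Proof.
case/setUP=> /imsetP[K KP ->].
- by have [t tR <-] := Bw_nonempty KP; exists t.
- have [t tR <-] := Cw_nonempty KP; exists t => //.
  exact: connect1 (gamma_edge tR).
Qed.

Lemma gamma_connected : {in gamma_vertices &, forall x y, connect (adj gamma_edges) x y}.
Proof.
move=> x y /gamma_vertex_bclass[t tR c_tx] /gamma_vertex_bclass[t' t'R c_t'y].
rewrite connect_adjC in c_tx.
exact: connect_trans c_tx (connect_trans (bclass_connected tR t'R) c_t'y).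
Qed.

Lemma Gamma_has_cycleE : Gamma_has_cycle w <-> has_cycle gamma_edges.
Proof.
by split=> -[p [size_p uniq_p cyc_p]]; exists p; rewrite -(eq_cycle Gadj_gamma) in cyc_p *.
Qed.

End Gamma.

Theorem proposition4p14 (n : nat) (w : 'S_n) :
  circuit_free w <-> #|Rw w| = #|Bw w| + #|Cw w| - 1.
Proof.
rewrite -size_gamma_edges -card_gamma_vertices /circuit_free.
have [acyclic_size size_acyclic] :=
  acyclic_iff_size (uniq_gamma_edges w) (@gamma_edges_simple _ w) (@gamma_connected _ w).
split=> [free | /size_acyclic acyclic].
- by apply: acyclic_size => /Gamma_has_cycleE.
- by move/Gamma_has_cycleE.
Qed.
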